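(* Let $n\ge2$, $F_1,\dots,F_n:\mathbb{R}^d\to\mathbb{R}^d$, $F=\frac1n\sum_iF_i$, with $F$ $\mu$-strongly monotone ($\mu>0$) and each $F_i$ $L_i$-Lipschitz; let $z_*$ be the solution of $F(z_* )=0$, $L_{max}=\max_iL_i$, $\sigma_*^2=\frac1n\sum_i\|F_i(z_* )\|^2$. Consider the iterates $z_0^k$ of IEG (defined in the context) started at $z_0$. 1. If $\gamma_2=2\gamma_1$ and $\gamma_1\le\frac{\mu}{10L_{max}^2\sqrt{10n^2+n+29}}$, then $$\|z_0^k-z_*\|^2\le\Big(1-\frac{\gamma_1n\mu}{4}\Big)^k\|z_0-z_*\|^2+\frac{48L_{max}^2}{\mu^2}\big[6n(n-1)\gamma_1^2+\gamma_2^2\big]\sigma_*^2.$$ 2. If IEG is run for $K$ epochs with $\gamma_2=2\gamma_1$ and $\gamma_1=\min\Big\{\frac{\mu}{10L_{max}^2\sqrt{10n^2+2n+29}},\frac{4\log(n^{1/2}K)}{\mu nK}\Big\}$, then $$\|z_0^K-z_*\|^2=\tilde{\mathcal{O}}\Big(e^{-\frac{K\mu^2}{L_{max}^2}}+\frac1{K^2}\Big).$$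
   Context: $\mu$-strongly monotone: $\langle F(z_1)-F(z_2),z_1-z_2\rangle\ge\mu\|z_1-z_2\|^2$. IEG (incremental extragradient) with step sizes $\gamma_1,\gamma_2>0$: set $z_0^0=z_0$; for each epoch $k=0,1,\dots$ and $i=0,\dots,n-1$ set $\bar z_i^k=z_i^k-\gamma_2F_{i+1}(z_i^k)$, $z_{i+1}^k=z_i^k-\gamma_1F_{i+1}(\bar z_i^k)$ (fixed original order every epoch); then $z_0^{k+1}=z_n^k$. $\tilde{\mathcal{O}}$ suppresses constant and logarithmic factors. *)

From HB Require Import structures.
From mathcomp Require Import all_boot all_order all_algebra.
From mathcomp Require Import all_classical all_reals all_analysis.
Set Implicit Arguments. Unset Strict Implicit. Unset Printing Implicit Defensive.
Import Order.TTheory GRing.Theory Num.Theory.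
Local Open Scope ring_scope.

Section Defs.
Variables (R : realType) (d n : nat).

Definition dotp (u v : 'rV[R]_d) : R := \sum_(j < d) u 0 j * v 0 j.
Definition sqnorm (v : 'rV[R]_d) : R := dotp v v.
Definition enorm (v : 'rV[R]_d) : R := Num.sqrt (sqnorm v).

Definition strongly_monotone (mu : R) (F : 'rV[R]_d -> 'rV[R]_d) : Prop :=
  forall z1 z2, mu * sqnorm (z1 - z2) <= dotp (F z1 - F z2) (z1 - z2).

Definition lipschitzE (L : R) (F : 'rV[R]_d -> 'rV[R]_d) : Prop :=
  forall x y, enorm (F x - F y) <= L * enorm (x - y).

Definition avgF (Fs : 'I_n -> 'rV[R]_d -> 'rV[R]_d) (z : 'rV[R]_d) : 'rV[R]_d :=
  n%:R^-1 *: \sum_(i < n) Fs i z.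

Definition Lmax (L : 'I_n -> R) : R := \big[Num.max/0]_(i < n) L i.

Definition sigma2 (Fs : 'I_n -> 'rV[R]_d -> 'rV[R]_d) (zs : 'rV[R]_d) : R :=
  n%:R^-1 * \sum_(i < n) sqnorm (Fs i zs).

Definition ieg_step (g1 g2 : R) (f : 'rV[R]_d -> 'rV[R]_d) (z : 'rV[R]_d) :=
  z - g1 *: f (z - g2 *: f z).

(* one epoch: inner steps with F_1, ..., F_n in the fixed original order
   (0-indexed here: Fs 0, ..., Fs (n-1)) *)
Definition ieg_epoch (g1 g2 : R) (Fs : 'I_n -> 'rV[R]_d -> 'rV[R]_d)
  (z : 'rV[R]_d) : 'rV[R]_d :=
  foldl (fun z i => ieg_step g1 g2 (Fs i) z) z (enum 'I_n).

(* z_0^k : the iterate at the start of epoch k, started at z_0^0 = z0 *)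
Definition ieg (g1 g2 : R) (Fs : 'I_n -> 'rV[R]_d -> 'rV[R]_d)
  (z0 : 'rV[R]_d) (k : nat) : 'rV[R]_d :=
  iter k (ieg_epoch g1 g2 Fs) z0.

End Defs.

From HB Require Import structures.
From mathcomp Require Import all_boot all_order all_algebra.
From mathcomp Require Import all_classical all_reals all_analysis.
From mathcomp Require Import ring lra.
Set Implicit Arguments. Unset Strict Implicit. Unset Printing Implicit Defensive.
Import Order.TTheory GRing.Theory Num.Theory.
Local Open Scope ring_scope.

(* Within one epoch the n inner extragradient steps never leave a ball of
   radius O(g T) around the starting point z, where
   T = sum_i ||F_i zs|| + n L ||z - zs||; hence the epoch coincides with the
   full forward step z - g n F(z) up to an error of order g^2 n L T.  Strong
   monotonicity makes that forward step contract ||z - zs||^2 by the factor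
   1 - 2 g n mu + (g n L)^2, and AM-GM absorbs the error, giving the one-epoch
   recursion ||z' - zs||^2 <= (1 - g n mu / 2) ||z - zs||^2
   + 56 g^3 n^3 L^2 sigma2 / mu; unrolling it gives part 1.  For part 2, with
   g = min(a0, 4 log(sqrt n K) / (mu n K)), either the contraction factor
   (1 - g n mu / 2)^K is at most 1 / (n K^2), or a0 is the minimum, which
   forces K <= 4 log(sqrt n K) / (a0 mu n); in both cases the error is
   O(log^2 K / K^2). *)

Lemma quadratic_ge0_discr (R : realFieldType) (a b c : R) :
  0 <= a -> (forall t, 0 <= a * t ^+ 2 - 2 * b * t + c) -> b ^+ 2 <= a * c.
Proof.
move=> a_ge0 q_ge0; have [a0|a_neq0] := eqVneq a 0.
  have [b0|b_neq0] := eqVneq b 0; first by rewrite a0 b0 expr0n mul0r.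
  have := q_ge0 ((c + 1) / (2 * b)).
  have -> : 2 * b * ((c + 1) / (2 * b)) = c + 1 by field; rewrite b_neq0.
  by rewrite a0 mul0r; lra.
have a_gt0 : 0 < a by rewrite lt_def a_neq0.
have := q_ge0 (b / a).
have -> : a * (b / a) ^+ 2 - 2 * b * (b / a) + c = c - b ^+ 2 / a by field.
by rewrite subr_ge0 ler_pdivrMr // mulrC.
Qed.

Section Euclid.
Variables (R : realType) (d : nat).
Implicit Types (u v w : 'rV[R]_d).

Lemma dotpC u v : dotp u v = dotp v u.
Proof. by apply: eq_bigr => j _; rewrite mulrC. Qed.

Lemma dotpDl u v w : dotp (u + v) w = dotp u w + dotp v w.
Proof. by rewrite /dotp -big_split; apply: eq_bigr => j _; rewrite mxE mulrDl. Qed.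

Lemma dotpZl a u v : dotp (a *: u) v = a * dotp u v.
Proof. by rewrite /dotp mulr_sumr; apply: eq_bigr => j _; rewrite mxE mulrA. Qed.

Lemma dotpNl u v : dotp (- u) v = - dotp u v.
Proof. by rewrite -scaleN1r dotpZl mulN1r. Qed.

Lemma dotpDr u v w : dotp u (v + w) = dotp u v + dotp u w.
Proof. by rewrite dotpC dotpDl !(dotpC u). Qed.

Lemma dotpZr a u v : dotp u (a *: v) = a * dotp u v.
Proof. by rewrite dotpC dotpZl dotpC. Qed.

Lemma dotpNr u v : dotp u (- v) = - dotp u v.
Proof. by rewrite dotpC dotpNl dotpC. Qed.

Lemma sqnorm_ge0 u : 0 <= sqnorm u.
Proof. by apply: sumr_ge0 => j _; rewrite -expr2 sqr_ge0. Qed.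

Lemma sqnormD u v : sqnorm (u + v) = sqnorm u + 2 * dotp u v + sqnorm v.
Proof. rewrite /sqnorm dotpDl !dotpDr (dotpC v u); ring. Qed.

Lemma sqnormB u v : sqnorm (u - v) = sqnorm u - 2 * dotp u v + sqnorm v.
Proof. rewrite sqnormD dotpNr /sqnorm dotpNl dotpNr opprK; ring. Qed.

Lemma sqnormZ a u : sqnorm (a *: u) = a ^+ 2 * sqnorm u.
Proof. rewrite /sqnorm dotpZl dotpZr; ring. Qed.

Lemma sqnorm_dim0 u : d = 0%N -> sqnorm u = 0.
Proof. by move=> d0; apply: big1 => j; have := ltn_ord j; rewrite {2}d0. Qed.

Lemma enorm_ge0 u : 0 <= enorm u.
Proof. exact: sqrtr_ge0. Qed.

Lemma sqr_enorm u : enorm u ^+ 2 = sqnorm u.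
Proof. by rewrite sqr_sqrtr // sqnorm_ge0. Qed.

Lemma enorm0 : enorm (0 : 'rV[R]_d) = 0.
Proof. by rewrite /enorm /sqnorm /dotp big1 ?sqrtr0 // => j _; rewrite mxE mul0r. Qed.

Lemma enormZ a u : enorm (a *: u) = `|a| * enorm u.
Proof. by rewrite /enorm sqnormZ sqrtrM ?sqr_ge0 // sqrtr_sqr. Qed.

Lemma enormN u : enorm (- u) = enorm u.
Proof. by rewrite -scaleN1r enormZ normrN normr1 mul1r. Qed.

Lemma dotp_sqr_le u v : dotp u v ^+ 2 <= sqnorm u * sqnorm v.
Proof.
apply: quadratic_ge0_discr (sqnorm_ge0 u) _ => t.
by have := sqnorm_ge0 (t *: u - v); rewrite sqnormB sqnormZ dotpZl; lra.
Qed.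

Lemma dotp_le_enorm u v : dotp u v <= enorm u * enorm v.
Proof.
rewrite /enorm -sqrtrM ?sqnorm_ge0 //; apply: le_trans (ler_norm _) _.
by rewrite -sqrtr_sqr ler_wsqrtr // dotp_sqr_le.
Qed.

Lemma ler_enormD u v : enorm (u + v) <= enorm u + enorm v.
Proof.
rewrite -(ler_pXn2r (_ : 0 < 2)%N) ?nnegrE ?addr_ge0 ?enorm_ge0 //.
by rewrite sqr_enorm sqnormD sqrrD !sqr_enorm; have := dotp_le_enorm u v; lra.
Qed.

Lemma ler_enormB u v : enorm (u - v) <= enorm u + enorm v.
Proof. by rewrite -(enormN v) ler_enormD. Qed.

Lemma ler_enorm_sum (I : Type) (s : seq I) (f : I -> 'rV[R]_d) :
  enorm (\sum_(i <- s) f i) <= \sum_(i <- s) enorm (f i).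
Proof.
elim: s => [|x s IH]; first by rewrite !big_nil enorm0.
by rewrite !big_cons (le_trans (ler_enormD _ _)) // lerD2l.
Qed.

End Euclid.

Lemma sqr_sum_le (R : realType) (n : nat) (x : 'I_n -> R) :
  (\sum_(i < n) x i) ^+ 2 <= n%:R * \sum_(i < n) x i ^+ 2.
Proof.
have := dotp_sqr_le (const_mx 1) (\row_i x i).
rewrite /sqnorm /dotp.
under eq_bigr do rewrite !mxE mul1r.
under [X in _ * X]eq_bigr do rewrite !mxE -expr2.
by under [X in X * _]eq_bigr do rewrite !mxE mul1r; rewrite sumr_const card_ord.
Qed.

Section EpochDrift.
Variables (R : realType) (d n : nat) (Fs : 'I_n -> 'rV[R]_d -> 'rV[R]_d).
Variables (L g : R) (zs z : 'rV[R]_d).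
Hypothesis Fs_lip : forall i, lipschitzE L (Fs i).
Hypothesis L_ge0 : 0 <= L.
Hypothesis g_ge0 : 0 <= g.
Hypothesis gLn_small : 5 * g * L * n%:R <= 1.

Let t i := enorm (Fs i zs) + L * enorm (z - zs).
Let T := \sum_(i < n) t i.

Let t_ge0 i : 0 <= t i.
Proof. by rewrite addr_ge0 ?mulr_ge0 ?enorm_ge0. Qed.

Let T_ge0 : 0 <= T.
Proof. exact: sumr_ge0. Qed.

Let t_le_T i : t i <= T.
Proof. by rewrite /T (bigD1 i) //= lerDl sumr_ge0. Qed.

Lemma enorm_Fs_le i p : enorm (Fs i p) <= t i + L * enorm (p - z).
Proof.
have zs_near : enorm (p - zs) <= enorm (p - z) + enorm (z - zs).
  by have := ler_enormD (p - z) (z - zs); rewrite addrA subrK.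
rewrite -[Fs i p](subrK (Fs i zs)) (le_trans (ler_enormD _ _)) //.
have := Fs_lip i p zs; have := ler_wpM2l L_ge0 zs_near; rewrite /t; lra.
Qed.

Section Step.
Variables (x : 'I_n) (u : 'rV[R]_d).
Hypothesis u_near : enorm (u - z) <= 2 * g * T.

Let midpoint := u - (2 * g) *: Fs x u.

Let gL_small : 4 * g * L <= 1.
Proof.
have n_ge1 : 1 <= n%:R :> R by rewrite ler1n (leq_ltn_trans (leq0n x) (ltn_ord x)).
have := ler_wpM2l (mulr_ge0 g_ge0 L_ge0) n_ge1; have := mulr_ge0 g_ge0 L_ge0.
by move: gLn_small; lra.
Qed.

Lemma midpoint_near : enorm (midpoint - z) <= 5 * g * T.
Proof.
have -> : midpoint - z = (u - z) - (2 * g) *: Fs x u by rewrite addrAC.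
rewrite (le_trans (ler_enormB _ _)) // enormZ ger0_norm ?mulr_ge0 //.
have g2_ge0 : 0 <= 2 * g by rewrite mulr_ge0.
have Fu_le : enorm (Fs x u) <= T + L * (2 * g * T).
  by rewrite (le_trans (enorm_Fs_le x u)) // lerD ?t_le_T ?ler_wpM2l.
have := ler_wpM2l g2_ge0 Fu_le; have := ler_wpM2r (mulr_ge0 g_ge0 T_ge0) gL_small.
move: u_near; lra.
Qed.

Lemma ieg_step_drift :
  enorm (ieg_step g (2 * g) (Fs x) u - u) <= g * t x + 5 * g ^+ 2 * L * T.
Proof.
rewrite /ieg_step -/midpoint addrAC subrr add0r enormN enormZ ger0_norm //.
have := ler_wpM2l g_ge0 (enorm_Fs_le x midpoint).
have := ler_wpM2l (mulr_ge0 g_ge0 L_ge0) midpoint_near; lra.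
Qed.

Lemma ieg_step_deviation :
  enorm (ieg_step g (2 * g) (Fs x) u - u + g *: Fs x z) <= 5 * g ^+ 2 * L * T.
Proof.
rewrite /ieg_step -/midpoint.
have -> : u - g *: Fs x midpoint - u + g *: Fs x z = - (g *: (Fs x midpoint - Fs x z)).
  by apply/rowP => j; rewrite !mxE; ring.
rewrite enormN enormZ ger0_norm //.
have := ler_wpM2l g_ge0 (Fs_lip x midpoint z).
have := ler_wpM2l (mulr_ge0 g_ge0 L_ge0) midpoint_near; lra.
Qed.

End Step.

Let partial_epoch (l : seq 'I_n) :=
  foldl (fun u i => ieg_step g (2 * g) (Fs i) u) z l.

Lemma partial_epoch_drift l : \sum_(i <- l) t i <= T -> (size l <= n)%N ->
  enorm (partial_epoch l - z)
    <= g * \sum_(i <- l) t i + 5 * g ^+ 2 * L * T * (size l)%:R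
  /\ enorm (partial_epoch l - z + g *: \sum_(i <- l) Fs i z)
    <= 5 * g ^+ 2 * L * T * (size l)%:R.
Proof.
elim/last_ind: l => [|l x IH].
  by rewrite /partial_epoch !big_nil subrr scaler0 addr0 enorm0 !mulr0 addr0.
rewrite !big_rcons size_rcons -natr1 /= => tlx_le lt_l_n.
have tl_le : \sum_(i <- l) t i <= T by rewrite (le_trans _ tlx_le) // lerDl.
have [drift dev] := IH tl_le (ltnW lt_l_n).
set u := partial_epoch l in drift dev *.
have u_near : enorm (u - z) <= 2 * g * T.
  have l_le_n : (size l)%:R <= n%:R :> R by rewrite ler_nat ltnW.
  have := ler_wpM2l g_ge0 tl_le.
  have := ler_wpM2l (mulr_ge0 (mulr_ge0 (mulr_ge0 (ler0n _ 5) (sqr_ge0 g)) L_ge0) T_ge0) l_le_n.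
  have := ler_wpM2r (mulr_ge0 g_ge0 T_ge0) gLn_small.
  move: drift; nra.
have -> : partial_epoch (rcons l x) = ieg_step g (2 * g) (Fs x) u.
  by rewrite /partial_epoch foldl_rcons.
split.
- have -> : ieg_step g (2 * g) (Fs x) u - z
      = (ieg_step g (2 * g) (Fs x) u - u) + (u - z) by rewrite addrA subrK.
  rewrite (le_trans (ler_enormD _ _)) //.
  by move: (ieg_step_drift x u_near) drift; lra.
- have -> : ieg_step g (2 * g) (Fs x) u - z + g *: (\sum_(i <- l) Fs i z + Fs x z)
      = (ieg_step g (2 * g) (Fs x) u - u + g *: Fs x z)
        + (u - z + g *: \sum_(i <- l) Fs i z).
    by apply/rowP => j; rewrite !mxE; ring.
  rewrite (le_trans (ler_enormD _ _)) //.
  by move: (ieg_step_deviation x u_near) dev; lra.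
Qed.

Lemma ieg_epoch_deviation : (0 < n)%N ->
  enorm (ieg_epoch g (2 * g) Fs z - z + (g * n%:R) *: avgF Fs z)
    <= 5 * g ^+ 2 * L * n%:R * \sum_(i < n) enorm (Fs i zs)
       + 5 * ((g * n%:R) ^+ 2 * L ^+ 2) * enorm (z - zs).
Proof.
move=> n_gt0; have -> : (g * n%:R) *: avgF Fs z = g *: \sum_(i < n) Fs i z.
  by rewrite /avgF scalerA -mulrA mulfV ?mulr1 // pnatr_eq0 -lt0n.
have := @partial_epoch_drift (enum 'I_n).
rewrite !big_enum size_enum_ord => /(_ (lexx _) (leqnn _)) [_] /le_trans; apply.
by rewrite /T big_split sumr_const card_ord -mulr_natl /=; lra.
Qed.

End EpochDrift.

Lemma contraction_arith (R : realFieldType) (a c r x e s X : R) :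
  0 < a -> a <= 1 / 30 -> 0 <= c -> c <= a / 30 -> 0 <= r -> x ^+ 2 <= 25 * a * X ->
  0 <= e -> e <= x + 5 * c * r -> s <= (1 - 2 * a + c) * r ^+ 2 ->
  s + 2 * r * e + e ^+ 2 <= (1 - a / 2) * r ^+ 2 + 56 * X.
Proof.
move=> a_gt0 a_small c_ge0 c_le r_ge0 x_sqr e_ge0 e_le s_le.
have X_ge0 : 0 <= X.
  by rewrite -(pmulr_rge0 _ (_ : 0 < 25 * a)) ?mulr_gt0 // (le_trans (sqr_ge0 x)).
have amgm : 2 * r * x <= a / 2 * r ^+ 2 + 50 * X.
  rewrite -(ler_pM2l a_gt0).
  by move: (sqr_ge0 (a * r - 2 * x)) x_sqr; lra.
have e_sqr : e ^+ 2 <= 50 * (a * X) + 50 * (c ^+ 2 * r ^+ 2).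
  have : e ^+ 2 <= (x + 5 * c * r) ^+ 2.
    by rewrite ler_pXn2r // nnegrE (le_trans e_ge0 e_le).
  by move: (sqr_ge0 (x - 5 * c * r)) x_sqr; lra.
have c_sqr : c ^+ 2 <= a / 900.
  have : c * c <= c * (1 / 30) by apply: ler_wpM2l => //; lra.
  by rewrite expr2; lra.
have := ler_wpM2r (sqr_ge0 r) c_sqr; have := ler_wpM2r (sqr_ge0 r) c_le.
have := ler_wpM2l r_ge0 e_le; have := ler_wpM2r X_ge0 a_small.
have := mulr_ge0 (ltW a_gt0) (sqr_ge0 r).
by move: s_le amgm e_sqr X_ge0; lra.
Qed.

Lemma avgF_lipschitz (R : realType) (d n : nat) (Fs : 'I_n -> 'rV[R]_d -> 'rV[R]_d)
    (L : R) :
  (0 < n)%N -> (forall i, lipschitzE L (Fs i)) -> lipschitzE L (avgF Fs).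
Proof.
move=> n_gt0 Fs_lip x y.
rewrite /avgF -scalerBr -sumrB enormZ ger0_norm ?invr_ge0 ?ler0n //.
rewrite ler_pdivrMl ?ltr0n // (le_trans (ler_enorm_sum _ _)) //.
have -> : n%:R * (L * enorm (x - y)) = \sum_(i < n) L * enorm (x - y).
  by rewrite sumr_const card_ord mulr_natl.
by apply: ler_sum => i _; exact: Fs_lip.
Qed.

Lemma strongly_monotone_le_lipschitz (R : realType) (d : nat)
    (F : 'rV[R]_d -> 'rV[R]_d) (mu L : R) :
  (0 < d)%N -> strongly_monotone mu F -> lipschitzE L F -> mu <= L.
Proof.
move=> d_gt0 F_sm F_lip; pose v : 'rV[R]_d := const_mx 1.
have v_gt0 : 0 < sqnorm v.
  rewrite /sqnorm /dotp (eq_bigr (fun=> 1)) ?sumr_const ?card_ord ?ltr0n // => j _.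
  by rewrite mxE mulr1.
have := F_sm v 0; have := F_lip v 0; rewrite !subr0 => F_le sm.
rewrite -(ler_pM2r v_gt0) (le_trans sm) // (le_trans (dotp_le_enorm _ _)) //.
by rewrite -sqr_enorm expr2 mulrA ler_wpM2r ?enorm_ge0.
Qed.

Lemma sqnorm_forward_step_le (R : realType) (d : nat) (F : 'rV[R]_d -> 'rV[R]_d)
    (mu L gam : R) (zs z : 'rV[R]_d) :
  strongly_monotone mu F -> lipschitzE L F -> 0 <= L -> F zs = 0 -> 0 <= gam ->
  sqnorm (z - zs - gam *: F z)
    <= (1 - 2 * gam * mu + gam ^+ 2 * L ^+ 2) * sqnorm (z - zs).
Proof.
move=> F_sm F_lip L_ge0 Fzs gam_ge0.
have := F_sm z zs; have := F_lip z zs; rewrite Fzs subr0 => Fz_le monotone.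
have Fz_sqr : sqnorm (F z) <= L ^+ 2 * sqnorm (z - zs).
  by rewrite -!sqr_enorm -exprMn ler_pXn2r ?nnegrE ?mulr_ge0 ?enorm_ge0.
rewrite [sqnorm (_ - gam *: _)]sqnormB sqnormZ dotpZr dotpC.
have := ler_wpM2l (mulr_ge0 (ler0n _ 2) gam_ge0) monotone.
have := ler_wpM2l (sqr_ge0 gam) Fz_sqr; lra.
Qed.

Section SmallStep.
Variables (R : realFieldType) (g N L mu : R).
Hypotheses (g_ge0 : 0 <= g) (N_ge0 : 0 <= N) (mu_gt0 : 0 < mu) (mu_le_L : mu <= L).
Hypothesis step_small : 30 * g * N * L ^+ 2 <= mu.

Let L_gt0 : 0 < L. Proof. exact: lt_le_trans mu_le_L. Qed.

Lemma small_step_gL : 30 * g * N * L <= 1.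
Proof.
rewrite -(ler_pM2r L_gt0) mul1r (le_trans _ mu_le_L) //.
by move: step_small; rewrite expr2; lra.
Qed.

Lemma small_step_gmu : g * N * mu <= 1 / 30.
Proof.
have := ler_wpM2l (mulr_ge0 g_ge0 N_ge0) mu_le_L; have := small_step_gL; lra.
Qed.

Lemma small_step_sqr : (g * N) ^+ 2 * L ^+ 2 <= g * N * mu / 30.
Proof.
have := ler_wpM2l (mulr_ge0 g_ge0 N_ge0) step_small.
by rewrite !expr2; lra.
Qed.

End SmallStep.

Lemma sqr_sum_enorm_le (R : realType) (d n : nat) (Fs : 'I_n -> 'rV[R]_d -> 'rV[R]_d)
    (zs : 'rV[R]_d) :
  (\sum_(i < n) enorm (Fs i zs)) ^+ 2 <= n%:R ^+ 2 * sigma2 Fs zs.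
Proof.
rewrite (le_trans (sqr_sum_le _)) // /sigma2 expr2 -mulrA.
have [->|n_neq0] := eqVneq (n%:R : R) 0; first by rewrite !mul0r.
by rewrite mulVKf //; under eq_bigr do rewrite sqr_enorm.
Qed.

Lemma ieg_epoch_contraction (R : realType) (d n : nat) (Fs : 'I_n -> 'rV[R]_d -> 'rV[R]_d)
    (L mu g : R) (zs z : 'rV[R]_d) :
  (0 < n)%N -> (forall i, lipschitzE L (Fs i)) -> strongly_monotone mu (avgF Fs) ->
  avgF Fs zs = 0 -> 0 < g -> 0 < mu -> mu <= L -> 30 * g * n%:R * L ^+ 2 <= mu ->
  sqnorm (ieg_epoch g (2 * g) Fs z - zs)
    <= (1 - g * n%:R * mu / 2) * sqnorm (z - zs)
       + 56 * (g ^+ 3 * n%:R ^+ 3 * L ^+ 2 * sigma2 Fs zs / mu).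
Proof.
move=> n_gt0 Fs_lip F_sm Fzs g_gt0 mu_gt0 mu_le_L step_small.
have L_ge0 : 0 <= L := ltW (lt_le_trans mu_gt0 mu_le_L).
have N_gt0 : 0 < n%:R :> R by rewrite ltr0n.
have S_sqr := sqr_sum_enorm_le Fs zs.
set N := n%:R in N_gt0 step_small S_sqr *.
set S := \sum_(i < n) enorm (Fs i zs) in S_sqr.
set w := z - zs - (g * N) *: avgF Fs z.
set E := ieg_epoch g (2 * g) Fs z - z + (g * N) *: avgF Fs z.
have gN_ge0 : 0 <= g * N by rewrite mulr_ge0 ?ltW.
have a_small := small_step_gmu (ltW g_gt0) (ltW N_gt0) mu_gt0 mu_le_L step_small.
have c_le := small_step_sqr (ltW g_gt0) (ltW N_gt0) step_small.
have w_sqr : sqnorm w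
    <= (1 - 2 * (g * N * mu) + (g * N) ^+ 2 * L ^+ 2) * enorm (z - zs) ^+ 2.
  rewrite sqr_enorm mulrA.
  exact: sqnorm_forward_step_le F_sm (avgF_lipschitz n_gt0 Fs_lip) L_ge0 Fzs gN_ge0.
have w_le : enorm w <= enorm (z - zs).
  rewrite -(ler_pXn2r (_ : 0 < 2)%N) ?nnegrE ?enorm_ge0 // sqr_enorm (le_trans w_sqr) //.
  by rewrite ler_piMl ?sqr_ge0 //; have := mulr_ge0 gN_ge0 (ltW mu_gt0); lra.
have E_le : enorm E
    <= 5 * g ^+ 2 * L * N * S + 5 * ((g * N) ^+ 2 * L ^+ 2) * enorm (z - zs).
  apply: ieg_epoch_deviation Fs_lip L_ge0 (ltW g_gt0) _ n_gt0.
  by have := small_step_gL mu_gt0 mu_le_L step_small; lra.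
have x_sqr : (5 * g ^+ 2 * L * N * S) ^+ 2
    <= 25 * (g * N * mu) * (g ^+ 3 * N ^+ 3 * L ^+ 2 * sigma2 Fs zs / mu).
  have := ler_wpM2l (mulr_ge0 (ler0n _ 25) (sqr_ge0 (g ^+ 2 * L * N))) S_sqr.
  rewrite (_ : 25 * (g * N * mu) * _ = 25 * (g ^+ 2 * L * N) ^+ 2 * (N ^+ 2 * sigma2 Fs zs)).
    by lra.
  by field; rewrite gt_eqF.
have -> : ieg_epoch g (2 * g) Fs z - zs = w + E.
  by apply/rowP => j; rewrite /w /E !mxE; ring.
rewrite sqnormD -(sqr_enorm E) -(sqr_enorm (z - zs)).
have := contraction_arith (mulr_gt0 (mulr_gt0 g_gt0 N_gt0) mu_gt0) a_small
  (mulr_ge0 (sqr_ge0 _) (sqr_ge0 _)) c_le (enorm_ge0 _) x_sqr (enorm_ge0 _) E_le w_sqr.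
have := ler_wpM2r (enorm_ge0 E) w_le; have := dotp_le_enorm w E; lra.
Qed.

Lemma contraction_iter_le (R : realFieldType) (u : nat -> R) (q c : R) :
  0 <= q -> q <= 1 -> 0 <= c -> (forall k, u k.+1 <= (1 - q) * u k + q * c) ->
  forall k, u k <= (1 - q) ^+ k * u 0 + c.
Proof.
move=> q_ge0 q_le1 c_ge0 u_step; elim=> [|k IH]; first by rewrite expr0 mul1r lerDl.
rewrite (le_trans (u_step k)) // exprS -mulrA.
have := ler_wpM2l (_ : 0 <= 1 - q) IH; rewrite subr_ge0 => /(_ q_le1); lra.
Qed.

Lemma sigma2_ge0 (R : realType) (d n : nat) (Fs : 'I_n -> 'rV[R]_d -> 'rV[R]_d)
    (zs : 'rV[R]_d) :
  0 <= sigma2 Fs zs.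
Proof. by rewrite mulr_ge0 ?invr_ge0 ?ler0n ?sumr_ge0 // => i _; exact: sqnorm_ge0. Qed.

Lemma ieg_sqnorm_le (R : realType) (d n : nat) (Fs : 'I_n -> 'rV[R]_d -> 'rV[R]_d)
    (L mu g : R) (zs z0 : 'rV[R]_d) :
  (0 < n)%N -> (forall i, lipschitzE L (Fs i)) -> strongly_monotone mu (avgF Fs) ->
  avgF Fs zs = 0 -> 0 < g -> 0 < mu -> mu <= L -> 30 * g * n%:R * L ^+ 2 <= mu ->
  forall k, sqnorm (ieg g (2 * g) Fs z0 k - zs)
    <= (1 - g * n%:R * mu / 2) ^+ k * sqnorm (z0 - zs)
       + 112 * g ^+ 2 * n%:R ^+ 2 * L ^+ 2 * sigma2 Fs zs / mu ^+ 2.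
Proof.
move=> n_gt0 Fs_lip F_sm Fzs g_gt0 mu_gt0 mu_le_L step_small.
have N_ge0 : 0 <= n%:R :> R := ler0n _ n.
have gmu_small := small_step_gmu (ltW g_gt0) N_ge0 mu_gt0 mu_le_L step_small.
apply: (contraction_iter_le (u := fun k => sqnorm (ieg g (2 * g) Fs z0 k - zs))).
- by have := mulr_ge0 (mulr_ge0 (ltW g_gt0) N_ge0) (ltW mu_gt0); lra.
- lra.
- apply: divr_ge0 (sqr_ge0 _).
  exact: mulr_ge0 (mulr_ge0 (mulr_ge0 (mulr_ge0 (ler0n _ 112) (sqr_ge0 g)) (sqr_ge0 _))
    (sqr_ge0 L)) (sigma2_ge0 _ _).
- move=> k; rewrite /ieg iterS.
  have -> : g * n%:R * mu / 2 * (112 * g ^+ 2 * n%:R ^+ 2 * L ^+ 2 * sigma2 Fs zs / mu ^+ 2)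
      = 56 * (g ^+ 3 * n%:R ^+ 3 * L ^+ 2 * sigma2 Fs zs / mu) by field; rewrite gt_eqF.
  exact: ieg_epoch_contraction.
Qed.

Lemma small_step_of_le_bound (R : realType) (N M L mu g : R) :
  0 <= N -> 0 <= M -> 0 < L -> 0 <= g ->
  g <= mu / (10 * L ^+ 2 * Num.sqrt (10 * N ^+ 2 + M + 29)) -> 30 * g * N * L ^+ 2 <= mu.
Proof.
move=> N_ge0 M_ge0 L_gt0 g_ge0.
have sqrt_ge : 3 * N <= Num.sqrt (10 * N ^+ 2 + M + 29).
  rewrite -(ler_pXn2r (_ : 0 < 2)%N) ?nnegrE ?sqrtr_ge0 ?mulr_ge0 //.
  by rewrite sqr_sqrtr; have := sqr_ge0 N; lra.
have den_gt0 : 0 < 10 * L ^+ 2 * Num.sqrt (10 * N ^+ 2 + M + 29).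
  by rewrite !mulr_gt0 ?exprn_gt0 ?sqrtr_gt0 ?ltr0n //; have := sqr_ge0 N; lra.
rewrite ler_pdivlMr // => g_le; apply: le_trans g_le.
have := ler_wpM2l (mulr_ge0 (mulr_ge0 (ler0n _ 10) g_ge0) (sqr_ge0 L)) sqrt_ge; lra.
Qed.

Lemma ieg_error_bound (R : realType) (d n : nat) (Fs : 'I_n -> 'rV[R]_d -> 'rV[R]_d)
    (L mu : R) (zs z0 : 'rV[R]_d) :
  (0 < n)%N -> (forall i, lipschitzE L (Fs i)) -> strongly_monotone mu (avgF Fs) ->
  avgF Fs zs = 0 -> 0 < mu -> mu <= L ->
  forall g1 : R, 0 < g1 ->
    g1 <= mu / (10 * L ^+ 2 * Num.sqrt (10 * n%:R ^+ 2 + n%:R + 29)) ->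
  forall k : nat,
    sqnorm (ieg g1 (2 * g1) Fs z0 k - zs)
    <= (1 - g1 * n%:R * mu / 4) ^+ k * sqnorm (z0 - zs)
       + 48 * L ^+ 2 / mu ^+ 2
         * (6 * n%:R * (n%:R - 1) * g1 ^+ 2 + (2 * g1) ^+ 2) * sigma2 Fs zs.
Proof.
move=> n_gt0 Fs_lip F_sm Fzs mu_gt0 mu_le_L g1 g1_gt0 g1_le k.
have N_ge0 : 0 <= n%:R :> R := ler0n _ n.
have L_gt0 : 0 < L := lt_le_trans mu_gt0 mu_le_L.
have step_small := small_step_of_le_bound N_ge0 N_ge0 L_gt0 (ltW g1_gt0) g1_le.
have gmu_small := small_step_gmu (ltW g1_gt0) N_ge0 mu_gt0 mu_le_L step_small.
apply: le_trans
  (ieg_sqnorm_le z0 n_gt0 Fs_lip F_sm Fzs g1_gt0 mu_gt0 mu_le_L step_small k) _.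
have gnmu_ge0 := mulr_ge0 (mulr_ge0 (ltW g1_gt0) N_ge0) (ltW mu_gt0).
apply: lerD.
  apply: ler_wpM2r; first exact: sqnorm_ge0.
  by apply: lerXn2r; rewrite ?nnegrE; lra.
set X := g1 ^+ 2 * L ^+ 2 * sigma2 Fs zs / mu ^+ 2.
have -> : 48 * L ^+ 2 / mu ^+ 2 * (6 * n%:R * (n%:R - 1) * g1 ^+ 2 + (2 * g1) ^+ 2)
    * sigma2 Fs zs = 48 * (6 * n%:R * (n%:R - 1) + 4) * X by rewrite /X; ring.
have -> : 112 * g1 ^+ 2 * n%:R ^+ 2 * L ^+ 2 * sigma2 Fs zs / mu ^+ 2
    = 112 * n%:R ^+ 2 * X by rewrite /X; ring.
apply: ler_wpM2r.
  apply: divr_ge0 (sqr_ge0 _).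
  exact: mulr_ge0 (mulr_ge0 (sqr_ge0 _) (sqr_ge0 _)) (sigma2_ge0 _ _).
(* 48 (6 n (n - 1) + 4) - 112 n^2 = 176 (n - 9/11)^2 + 192 - 1296/11 *)
have := sqr_ge0 (n%:R - 9 / 11 :> R); lra.
Qed.

Lemma pow1B_le_expR (R : realType) (x : R) (K : nat) :
  0 <= x -> x <= 1 -> (1 - x) ^+ K <= expR (- (x * K%:R)).
Proof.
move=> x_ge0 x_le1; rewrite -mulNr expRM_natr.
by apply: lerXn2r; rewrite ?nnegrE ?expR_ge0 //; [lra | have := expR_ge1Dx (- x); lra].
Qed.

Section StepRate.
Variables (R : realType) (m A c lam : R) (K : nat).
Hypotheses (m_gt0 : 0 < m) (A_ge0 : 0 <= A) (c_ge0 : 0 <= c) (K_gt0 : (0 < K)%N).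

Let Kr_gt0 : 0 < K%:R :> R. Proof. by rewrite ltr0n. Qed.

Lemma tuned_step_le (b : R) : 0 < b -> b * m <= 2 -> b * m * K%:R = 4 * lam ->
  K%:R ^+ 2 <= expR (2 * lam) ->
  (1 - b * m / 2) ^+ K * A + c * b ^+ 2 <= (A + 16 * c / m ^+ 2 * lam ^+ 2) / K%:R ^+ 2.
Proof.
move=> b_gt0 bm_le bmK K_le.
have pow_le : (1 - b * m / 2) ^+ K <= K%:R ^- 2.
  apply: le_trans (pow1B_le_expR K _ _) _; try by have := mulr_gt0 b_gt0 m_gt0; lra.
  have -> : b * m / 2 * K%:R = 2 * lam by lra.
  by rewrite expRN lef_pV2 ?posrE ?expR_gt0 ?exprn_gt0.
have -> : c * b ^+ 2 = 16 * c / m ^+ 2 * lam ^+ 2 / K%:R ^+ 2.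
  have -> : b = 4 * lam / (m * K%:R) by rewrite -bmK; field; rewrite !gt_eqF.
  by field; rewrite !gt_eqF.
by have := ler_wpM2r A_ge0 pow_le; rewrite mulrDl mulrC; lra.
Qed.

(* The cap a0 is the minimum only while K <= 4 lam / (a0 m), so there the
   trivial O(1) bound is already O(lam^2 / K^2). *)
Lemma capped_step_le (a0 : R) : 0 < a0 -> a0 * m <= 2 -> a0 * m * K%:R <= 4 * lam ->
  (1 - a0 * m / 2) ^+ K * A + c * a0 ^+ 2
    <= 16 * (A + c * a0 ^+ 2) / (a0 * m) ^+ 2 * lam ^+ 2 / K%:R ^+ 2.
Proof.
move=> a0_gt0 a0m_le a0mK_le.
have a0mK_gt0 : 0 < a0 * m * K%:R by rewrite !mulr_gt0.
have pow_le1 : (1 - a0 * m / 2) ^+ K <= 1.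
  by rewrite exprn_ile1 //; have := mulr_gt0 a0_gt0 m_gt0; lra.
have ratio_ge1 : 1 <= 16 * lam ^+ 2 / (a0 * m * K%:R) ^+ 2.
  rewrite ler_pdivlMr ?exprn_gt0 // mul1r.
  have -> : 16 * lam ^+ 2 = (4 * lam) ^+ 2 by ring.
  by apply: lerXn2r; rewrite ?nnegrE //; lra.
have -> : 16 * (A + c * a0 ^+ 2) / (a0 * m) ^+ 2 * lam ^+ 2 / K%:R ^+ 2
    = (A + c * a0 ^+ 2) * (16 * lam ^+ 2 / (a0 * m * K%:R) ^+ 2).
  by field; rewrite !gt_eqF.
have W_ge0 : 0 <= A + c * a0 ^+ 2 := addr_ge0 A_ge0 (mulr_ge0 c_ge0 (sqr_ge0 a0)).
have := ler_wpM2l W_ge0 ratio_ge1; have := ler_wpM2r A_ge0 pow_le1; lra.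
Qed.

Lemma min_step_rate (a0 g : R) : 0 < a0 -> a0 * m <= 2 -> 0 < lam ->
  K%:R ^+ 2 <= expR (2 * lam) -> g = Num.min a0 (4 * lam / (m * K%:R)) ->
  (1 - g * m / 2) ^+ K * A + c * g ^+ 2
    <= (A + (16 * c / m ^+ 2 + 16 * (A + c * a0 ^+ 2) / (a0 * m) ^+ 2) * lam ^+ 2)
       / K%:R ^+ 2.
Proof.
move=> a0_gt0 a0m_le lam_gt0 K_le ->.
have c1_ge0 : 0 <= 16 * c / m ^+ 2 := divr_ge0 (mulr_ge0 (ler0n _ 16) c_ge0) (sqr_ge0 m).
have c2_ge0 : 0 <= 16 * (A + c * a0 ^+ 2) / (a0 * m) ^+ 2.
  apply: divr_ge0 (mulr_ge0 (ler0n _ 16) _) (sqr_ge0 _).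
  exact: addr_ge0 A_ge0 (mulr_ge0 c_ge0 (sqr_ge0 _)).
have K2_gt0 : 0 < K%:R ^+ 2 :> R by rewrite exprn_gt0.
have [a0_le | lt_a0] := lerP a0 (4 * lam / (m * K%:R)).
- apply: le_trans (capped_step_le a0_gt0 a0m_le _) _.
    by move: a0_le; rewrite ler_pdivlMr ?mulr_gt0 // mulrA.
  rewrite ler_pM2r ?invr_gt0 //.
  by have := mulr_ge0 c1_ge0 (sqr_ge0 lam); move: A_ge0; lra.
- apply: le_trans (tuned_step_le _ _ _ K_le) _.
  + by rewrite divr_gt0 ?mulr_gt0.
  + by have := ler_wpM2r (ltW m_gt0) (ltW lt_a0); lra.
  + by field; rewrite !gt_eqF.
  rewrite ler_pM2r ?invr_gt0 //.
  by have := mulr_ge0 c2_ge0 (sqr_ge0 lam); lra.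
Qed.

End StepRate.

Lemma ln_mul_le (R : realType) (x y : R) :
  1 <= x -> 1 <= y -> ln (x * y) <= (1 + ln x) * (1 + ln y).
Proof.
move=> x_ge1 y_ge1; rewrite lnM ?posrE; try lra.
by have := ln_ge0 x_ge1; have := ln_ge0 y_ge1; nra.
Qed.

Section Rates.
Variables (R : realType) (d n : nat) (Fs : 'I_n -> 'rV[R]_d -> 'rV[R]_d).
Variables (L mu : R) (zs z0 : 'rV[R]_d).
Hypothesis n_ge2 : (2 <= n)%N.
Hypothesis Fs_lip : forall i, lipschitzE L (Fs i).
Hypothesis F_sm : strongly_monotone mu (avgF Fs).
Hypothesis Fzs : avgF Fs zs = 0.
Hypotheses (mu_gt0 : 0 < mu) (mu_le_L : mu <= L).

Let N := n%:R : R.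
Let a0 := mu / (10 * L ^+ 2 * Num.sqrt (10 * N ^+ 2 + 2 * N + 29)).
Let A := sqnorm (z0 - zs).
Let c := 112 * N ^+ 2 * L ^+ 2 * sigma2 Fs zs / mu ^+ 2.
Let C := 16 * c / (mu * N) ^+ 2 + 16 * (A + c * a0 ^+ 2) / (a0 * (mu * N)) ^+ 2.

Let c_ge0 : 0 <= c.
Proof.
apply: divr_ge0 (sqr_ge0 _).
exact: mulr_ge0 (mulr_ge0 (mulr_ge0 (ler0n _ 112) (sqr_ge0 _)) (sqr_ge0 L)) (sigma2_ge0 _ _).
Qed.

Lemma ieg_tuned_step_rate (K : nat) (g1 : R) : (0 < K)%N ->
  g1 = Num.min a0 (4 * ln (Num.sqrt N * K%:R) / (mu * N * K%:R)) ->
  sqnorm (ieg g1 (2 * g1) Fs z0 K - zs)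
    <= (A + C * ln (Num.sqrt N * K%:R) ^+ 2) / K%:R ^+ 2.
Proof.
move=> K_gt0 g1_def; have N_ge2 : 2 <= N by rewrite /N ler_nat.
have L_gt0 : 0 < L := lt_le_trans mu_gt0 mu_le_L.
have n_gt0 : (0 < n)%N by rewrite (leq_trans _ n_ge2).
have K_ge1 : 1 <= K%:R :> R by rewrite ler1n.
have sqrtN_gt1 : 1 < Num.sqrt N by rewrite -sqrtr1 ltr_sqrt; lra.
have a0_gt0 : 0 < a0.
  by rewrite divr_gt0 ?mulr_gt0 ?exprn_gt0 ?sqrtr_gt0 ?ltr0n //; have := sqr_ge0 N; lra.
have a0_small : 30 * a0 * N * L ^+ 2 <= mu.
  by apply: small_step_of_le_bound (lexx _); rewrite ?ltW //; lra.
set lam := ln (Num.sqrt N * K%:R) in g1_def *.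
have lam_gt0 : 0 < lam.
  by rewrite ln_gt0 //; have := ler_wpM2l (ltW (lt_trans ltr01 sqrtN_gt1)) K_ge1; lra.
have g1_gt0 : 0 < g1.
  by rewrite g1_def lt_min a0_gt0 divr_gt0 ?mulr_gt0 ?ltr0n //; lra.
have step_small : 30 * g1 * N * L ^+ 2 <= mu.
  apply: le_trans a0_small; rewrite !ler_wpM2r ?sqr_ge0 ?ler0n //.
  by rewrite ler_wpM2l // g1_def ge_min lexx.
have K_le : K%:R ^+ 2 <= expR (2 * lam).
  rewrite mulrC expRM_natr lnK ?posrE ?mulr_gt0 ?sqrtr_gt0 ?ltr0n //.
  by rewrite exprMn sqr_sqrtr ?ler_peMl ?sqr_ge0 //; lra.
have a0_le : a0 * (mu * N) <= 2.
  by have := small_step_gmu (ltW a0_gt0) (ler0n _ n) mu_gt0 mu_le_L a0_small; lra.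
apply: le_trans
  (ieg_sqnorm_le z0 n_gt0 Fs_lip F_sm Fzs g1_gt0 mu_gt0 mu_le_L step_small K) _.
have -> : g1 * N * mu = g1 * (mu * N) by ring.
have -> : 112 * g1 ^+ 2 * N ^+ 2 * L ^+ 2 * sigma2 Fs zs / mu ^+ 2 = c * g1 ^+ 2.
  by rewrite /c; ring.
have mN_gt0 : 0 < mu * N by rewrite mulr_gt0 //; lra.
exact (min_step_rate mN_gt0 (sqnorm_ge0 _) c_ge0 K_gt0 a0_gt0 a0_le lam_gt0 K_le g1_def).
Qed.

Lemma ieg_error_rate :
  exists (C' : R) (p : nat), forall K : nat, (1 <= K)%N ->
    let g1 := Num.min
                (mu / (10 * L ^+ 2 * Num.sqrt (10 * n%:R ^+ 2 + 2 * n%:R + 29)))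
                (4 * ln (Num.sqrt n%:R * K%:R) / (mu * n%:R * K%:R)) in
    sqnorm (ieg g1 (2 * g1) Fs z0 K - zs)
    <= C' * (1 + ln K%:R) ^+ p
         * (expR (- (K%:R * mu ^+ 2 / L ^+ 2)) + (K%:R ^+ 2)^-1).
Proof.
have C_ge0 : 0 <= C.
  apply: addr_ge0; first exact: divr_ge0 (mulr_ge0 (ler0n _ 16) c_ge0) (sqr_ge0 _).
  apply: divr_ge0 (mulr_ge0 (ler0n _ 16) _) (sqr_ge0 _).
  exact: addr_ge0 (sqnorm_ge0 _) (mulr_ge0 c_ge0 (sqr_ge0 _)).
have N_ge2 : 2 <= N by rewrite /N ler_nat.
exists (A + C * (1 + ln (Num.sqrt N)) ^+ 2), 2%N => K K_gt0 /=.
apply: le_trans (ieg_tuned_step_rate K_gt0 (erefl _)) _.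
have K_ge1 : 1 <= K%:R :> R by rewrite ler1n.
have sqrtN_ge1 : 1 <= Num.sqrt N by rewrite -sqrtr1 ler_sqrt //; lra.
have ell_ge0 := ln_ge0 sqrtN_ge1; have lK_ge0 := ln_ge0 K_ge1.
have lam_sqr : ln (Num.sqrt N * K%:R) ^+ 2
    <= ((1 + ln (Num.sqrt N)) * (1 + ln K%:R)) ^+ 2.
  apply: lerXn2r; rewrite ?nnegrE ?ln_mul_le //; last nra.
  by apply: ln_ge0; have := ler_pM ler01 ler01 sqrtN_ge1 K_ge1; rewrite mulr1.
have P_ge1 : 1 <= (1 + ln K%:R : R) ^+ 2 by rewrite exprn_ege1 //; lra.
have num_le : A + C * ln (Num.sqrt N * K%:R) ^+ 2
    <= (A + C * (1 + ln (Num.sqrt N)) ^+ 2) * (1 + ln K%:R) ^+ 2.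
  have := ler_wpM2l C_ge0 lam_sqr; have := ler_wpM2l (sqnorm_ge0 (z0 - zs)) P_ge1.
  rewrite /A; lra.
apply: le_trans (ler_wpM2r (ltW _) num_le) _; first by rewrite invr_gt0 exprn_gt0 ?ltr0n.
rewrite mulrDr lerDr mulr_ge0 ?expR_ge0 // mulr_ge0 ?sqr_ge0 //.
exact: addr_ge0 (sqnorm_ge0 _) (mulr_ge0 C_ge0 (sqr_ge0 _)).
Qed.

End Rates.

Theorem corollary2 (R : realType) (d n : nat) (Fs : 'I_n -> 'rV[R]_d -> 'rV[R]_d)
  (L : 'I_n -> R) (mu : R) (zs z0 : 'rV[R]_d) :
  (2 <= n)%N ->
  0 < mu ->
  strongly_monotone mu (avgF Fs) ->
  (forall i, 0 <= L i) ->
  (forall i, lipschitzE (L i) (Fs i)) ->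
  avgF Fs zs = 0 ->
  (* part 1 *)
  (forall g1 : R, 0 < g1 ->
     g1 <= mu / (10 * Lmax L ^+ 2 * Num.sqrt (10 * n%:R ^+ 2 + n%:R + 29)) ->
     forall k : nat,
       sqnorm (ieg g1 (2 * g1) Fs z0 k - zs)
       <= (1 - g1 * n%:R * mu / 4) ^+ k * sqnorm (z0 - zs)
          + 48 * Lmax L ^+ 2 / mu ^+ 2
            * (6 * n%:R * (n%:R - 1) * g1 ^+ 2 + (2 * g1) ^+ 2) * sigma2 Fs zs)
  /\
  (* part 2: O~ as K -> oo, hiding a constant C and a polylog(K) factor *)
  (exists (C : R) (p : nat), forall K : nat, (1 <= K)%N ->
     let g1 := Num.min
                 (mu / (10 * Lmax L ^+ 2 * Num.sqrt (10 * n%:R ^+ 2 + 2 * n%:R + 29)))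
                 (4 * ln (Num.sqrt n%:R * K%:R) / (mu * n%:R * K%:R)) in
     sqnorm (ieg g1 (2 * g1) Fs z0 K - zs)
     <= C * (1 + ln K%:R) ^+ p
          * (expR (- (K%:R * mu ^+ 2 / Lmax L ^+ 2)) + (K%:R ^+ 2)^-1)).
Proof.
move=> n_ge2 mu_gt0 F_sm _ Fs_lip Fzs.
have n_gt0 : (0 < n)%N by rewrite (leq_trans _ n_ge2).
(* In dimension 0 every norm vanishes, and mu <= Lmax L, needed below, may fail. *)
have [d0 | d_gt0] := posnP d.
  have sigma0 : sigma2 Fs zs = 0.
    by rewrite /sigma2 big1 ?mulr0 // => i _; exact: sqnorm_dim0.
  split=> [g1 _ _ k | ]; first by rewrite !(sqnorm_dim0 _ d0) sigma0 !mulr0 addr0.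
  by exists 0, 0%N => K _ /=; rewrite sqnorm_dim0 // !mul0r.
have Fs_lipmax i : lipschitzE (Lmax L) (Fs i).
  move=> x y; apply: le_trans (Fs_lip i x y) (ler_wpM2r (enorm_ge0 _) _).
  exact: le_bigmax.
have mu_le := strongly_monotone_le_lipschitz d_gt0 F_sm (avgF_lipschitz n_gt0 Fs_lipmax).
split; first exact: ieg_error_bound.
exact: ieg_error_rate.
Qed.
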